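(* Let $X$ be a continuous vector field on $\mathbb{S}^1$. Then for any $A\in\mathrm{O}_0(1,2)$ and $v\in\mathbb{R}^{1,2}$, $w(A_*X+\Lambda(v))=w(X)$.
   Context: $\mathbb{R}^{1,2}$ is $\mathbb{R}^3$ with $\langle x,y\rangle=-x_0y_0+x_1y_1+x_2y_2$; $\mathrm{O}_0(1,2)$ is the identity component of its linear isometry group, acting on $\overline{\mathbb{D}^2}$ by $A\cdot\eta=\Pi(A(1,\eta))$, $\Pi(x_0,x_1,x_2)=(x_1/x_0,x_2/x_0)$; $A_*X$ is the pushforward of $X$ by $z\mapsto A\cdot z$ on $\mathbb{S}^1$. $\Lambda(v)$ is the Killing field (extended to $\mathbb{S}^1$) $\eta\mapsto\mathrm{d}_{(1,\eta)}\Pi((1,\eta)\boxtimes v)$, where $\langle x\boxtimes y,u\rangle=\det(x,y,u)$. A vector field $Y$ on $\mathbb{S}^1$ is $Y(z)=iz\phi_Y(z)$. $\phi_Y^-(\eta)=\sup\{a(\eta):a\text{ affine},a|_{\mathbb{S}^1}\le\phi_Y\}$, $\phi_Y^+(\eta)=\inf\{a(\eta):a\text{ affine},a|_{\mathbb{S}^1}\ge\phi_Y\}$. Width: $w(Y)=\sup_{\eta\in\mathbb{D}^2}\frac{\phi_Y^+(\eta)-\phi_Y^-(\eta)}{\sqrt{1-|\eta|^2}}\in[0,+\infty]$. *)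

From HB Require Import structures.
From mathcomp Require Import all_boot all_order all_algebra.
From mathcomp Require Import all_classical all_reals all_analysis.
Set Implicit Arguments. Unset Strict Implicit. Unset Printing Implicit Defensive.
Import Order.TTheory GRing.Theory Num.Theory.
Import numFieldNormedType.Exports.
Local Open Scope classical_set_scope.
Local Open Scope ring_scope.

Section Defs.
Variable R : realType.

(* Points / tangent vectors of R^2 are pairs; vectors of R^{1,2} are 'cV[R]_3. *)
Definition vec3 (a b c : R) : 'cV[R]_3 := \col_(i < 3) [:: a; b; c]`_i.
Definition c0 (x : 'cV[R]_3) : R := x ord0 ord0.
Definition c1 (x : 'cV[R]_3) : R := x (inord 1) ord0.
Definition c2 (x : 'cV[R]_3) : R := x (inord 2) ord0.

Definition mink (x y : 'cV[R]_3) : R := - c0 x * c0 y + c1 x * c1 y + c2 x * c2 y.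

(* O_0(1,2): the identity component of the isometry group of the form,
   i.e. SO^+(1,2): isometries with det 1 preserving the future cone (A_00 > 0). *)
Definition O0_12 (A : 'M[R]_3) : Prop :=
  [/\ forall x y : 'cV[R]_3, mink (A *m x) (A *m y) = mink x y,
      \det A = 1 & 0 < A ord0 ord0].

(* x ⊠ y : the unique vector with <x ⊠ y, u> = det(x,y,u) (written out). *)
Definition boxtimes (x y : 'cV[R]_3) : 'cV[R]_3 :=
  vec3 (- (c1 x * c2 y - c2 x * c1 y))
       (c2 x * c0 y - c0 x * c2 y)
       (c0 x * c1 y - c1 x * c0 y).

Definition Pi (x : 'cV[R]_3) : R * R := (c1 x / c0 x, c2 x / c0 x).
Definition dPi (x u : 'cV[R]_3) : R * R :=
  ((c1 u * c0 x - c1 x * c0 u) / (c0 x ^+ 2),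
   (c2 u * c0 x - c2 x * c0 u) / (c0 x ^+ 2)).

Definition lift (eta : R * R) : 'cV[R]_3 := vec3 1 eta.1 eta.2.

Definition act (A : 'M[R]_3) (eta : R * R) : R * R := Pi (A *m lift eta).
(* differential of eta |-> A . eta at eta applied to u (chain rule) *)
Definition Dact (A : 'M[R]_3) (eta u : R * R) : R * R :=
  dPi (A *m lift eta) (A *m vec3 0 u.1 u.2).

Definition sqnorm (z : R * R) : R := z.1 ^+ 2 + z.2 ^+ 2.
Definition S1 : set (R * R) := [set z | sqnorm z = 1].
Definition D2 : set (R * R) := [set z | sqnorm z < 1].

(* vector fields: maps z |-> Y z (only values on S1 are relevant) *)
Definition vfield := R * R -> R * R.

Definition vf_push (A : 'M[R]_3) (X : vfield) : vfield :=
  fun w => let z := act (invmx A) w in Dact A z (X z).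

Definition Killing (v : 'cV[R]_3) : vfield :=
  fun eta => dPi (lift eta) (boxtimes (lift eta) v).

Definition vf_add (X Y : vfield) : vfield :=
  fun z => ((X z).1 + (Y z).1, (X z).2 + (Y z).2).

Definition tangent (Y : vfield) : Prop :=
  forall z, S1 z -> (Y z).1 * z.1 + (Y z).2 * z.2 = 0.

(* phi_Y with Y(z) = i z phi_Y(z): for tangent Y and |z| = 1,
   phi_Y(z) = <Y(z), iz> where iz = (-z2, z1). *)
Definition phi (Y : vfield) (z : R * R) : R := - (Y z).1 * z.2 + (Y z).2 * z.1.

Definition aff (a : R * R * R) (eta : R * R) : R := a.1.1 + a.1.2 * eta.1 + a.2 * eta.2.

Definition phi_minus (Y : vfield) (eta : R * R) : \bar R :=
  ereal_sup [set (aff a eta)%:E | a in [set a | forall z, S1 z -> aff a z <= phi Y z]].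
Definition phi_plus (Y : vfield) (eta : R * R) : \bar R :=
  ereal_inf [set (aff a eta)%:E | a in [set a | forall z, S1 z -> phi Y z <= aff a z]].

Definition vf_width (Y : vfield) : \bar R :=
  ereal_sup [set ((phi_plus Y eta - phi_minus Y eta) * ((Num.sqrt (1 - sqnorm eta))^-1)%:E)%E
            | eta in D2].

End Defs.

From Pilot Require Import Defs.
From mathcomp Require Import all_boot all_order all_algebra ring lra.
From mathcomp Require Import all_classical all_reals all_analysis.
Set Implicit Arguments. Unset Strict Implicit. Unset Printing Implicit Defensive.
Import Order.TTheory GRing.Theory Num.Theory.
Import numFieldNormedType.Exports.
Local Open Scope classical_set_scope.
Local Open Scope ring_scope.

(* Let [lambda(eta)] be the time coordinate of [A (1, eta)]; it is positive on
   the closed disc since [A] preserves the future cone. Affine functions on the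
   disc are the maps [eta |-> <u, (1, eta)>], u in R^{1,2}. As [A] commutes with
   the cross product [x ⊠ y], on the circle
     phi_{A_*X + Lambda(v)}(A.z) = phi_X(z) / lambda(z) + <v, (1, A.z)>,
   so [u |-> A^-1 (u - v)] matches the affine minorants (majorants) of the two
   fields and phi^±_{A_*X + Lambda(v)}(A.eta) = phi^±_X(eta) / lambda(eta)
   + <v, (1, A.eta)>. Since 1 - |A.eta|^2 = (1 - |eta|^2) / lambda(eta)^2, the
   quotient defining the width takes the same value at [A.eta] as at [eta], and
   [eta |-> A.eta] is a bijection of the disc. *)


Lemma det_mx33 (R : comNzRingType) (M : 'M[R]_3) :
  \det M = M 0 0 * (M 1 1 * M 2 2 - M 1 2 * M 2 1)
         - M 0 1 * (M 1 0 * M 2 2 - M 1 2 * M 2 0)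
         + M 0 2 * (M 1 0 * M 2 1 - M 1 1 * M 2 0).
Proof.
rewrite (expand_det_row M 0) !big_ord_recl big_ord0 /cofactor.
rewrite !(expand_det_row _ 0) !big_ord_recl !big_ord0 /cofactor.
rewrite !(expand_det_row _ 0) !big_ord_recl !big_ord0 /cofactor !det_mx00 !mxE /=.
set g := fun i j : nat => M (inord i) (inord j).
have HM : forall i j : 'I_3, M i j = g i j by move=> i j; rewrite /g !inord_val.
rewrite !HM /= /bump /= !expr0 !expr1; ring.
Qed.

Lemma mulmx_col3 (R : comNzRingType) (M : 'M[R]_3) (x : 'cV[R]_3) (i : 'I_3) :
  (M *m x) i 0 = M i 0 * x 0 0 + M i 1 * x 1 0 + M i 2 * x 2 0.
Proof.
rewrite mxE !big_ord_recl big_ord0 addr0 addrA.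
have -> : lift ord0 (ord0 : 'I_2) = 1 by apply/val_inj.
by have -> : lift ord0 (lift ord0 (ord0 : 'I_1)) = 2 by apply/val_inj.
Qed.

Local Notation lift := Defs.lift.

Section Minkowski.
Variable R : realType.
Implicit Types (x y u : 'cV[R]_3) (a b c k : R).

Lemma c0_entry x : c0 x = x 0 0. Proof. by []. Qed.
Lemma c1_entry x : c1 x = x 1 0.
Proof. by rewrite /c1; congr (x _ _); apply/val_inj; rewrite /= inordK. Qed.
Lemma c2_entry x : c2 x = x 2 0.
Proof. by rewrite /c2; congr (x _ _); apply/val_inj; rewrite /= inordK. Qed.

Lemma c0_vec3 a b c : c0 (vec3 a b c) = a. Proof. by rewrite /c0 mxE. Qed.
Lemma c1_vec3 a b c : c1 (vec3 a b c) = b. Proof. by rewrite /c1 mxE inordK. Qed.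
Lemma c2_vec3 a b c : c2 (vec3 a b c) = c. Proof. by rewrite /c2 mxE inordK. Qed.
Lemma c0D x y : c0 (x + y) = c0 x + c0 y. Proof. by rewrite /c0 mxE. Qed.
Lemma c1D x y : c1 (x + y) = c1 x + c1 y. Proof. by rewrite /c1 mxE. Qed.
Lemma c2D x y : c2 (x + y) = c2 x + c2 y. Proof. by rewrite /c2 mxE. Qed.
Lemma c0N x : c0 (- x) = - c0 x. Proof. by rewrite /c0 mxE. Qed.
Lemma c1N x : c1 (- x) = - c1 x. Proof. by rewrite /c1 mxE. Qed.
Lemma c2N x : c2 (- x) = - c2 x. Proof. by rewrite /c2 mxE. Qed.
Lemma c0Z k x : c0 (k *: x) = k * c0 x. Proof. by rewrite /c0 mxE. Qed.
Lemma c1Z k x : c1 (k *: x) = k * c1 x. Proof. by rewrite /c1 mxE. Qed.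
Lemma c2Z k x : c2 (k *: x) = k * c2 x. Proof. by rewrite /c2 mxE. Qed.
Definition coordE := (c0_vec3, c1_vec3, c2_vec3, c0D, c1D, c2D, c0N, c1N, c2N,
  c0Z, c1Z, c2Z).

Lemma cV3P x y : c0 x = c0 y -> c1 x = c1 y -> c2 x = c2 y -> x = y.
Proof.
rewrite !c0_entry !c1_entry !c2_entry => h0 h1 h2.
apply/matrixP => i j; rewrite (ord1 j).
by case: i => -[|[|[|//]]] Hi; [move: h0 | move: h1 | move: h2]; congr (_ = _);
  congr (_ _ _); apply/val_inj.
Qed.

Lemma c_mulmx (M : 'M[R]_3) x :
  [/\ c0 (M *m x) = M 0 0 * c0 x + M 0 1 * c1 x + M 0 2 * c2 x,
      c1 (M *m x) = M 1 0 * c0 x + M 1 1 * c1 x + M 1 2 * c2 x &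
      c2 (M *m x) = M 2 0 * c0 x + M 2 1 * c1 x + M 2 2 * c2 x].
Proof. by rewrite !c0_entry !c1_entry !c2_entry !mulmx_col3. Qed.

Lemma c0_mulmx_e0 (M : 'M[R]_3) : c0 (M *m vec3 1 0 0) = M 0 0.
Proof. by case: (c_mulmx M (vec3 1 0 0)) => -> _ _; rewrite !coordE; ring. Qed.

Lemma minkDl x y u : mink (x + y) u = mink x u + mink y u.
Proof. rewrite /mink !coordE; ring. Qed.
Lemma minkNl x u : mink (- x) u = - mink x u.
Proof. rewrite /mink !coordE; ring. Qed.
Lemma minkBl x y u : mink (x - y) u = mink x u - mink y u.
Proof. by rewrite minkDl minkNl. Qed.
Lemma minkZr k x u : mink x (k *: u) = k * mink x u.
Proof. rewrite /mink !coordE; ring. Qed.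

Lemma mink_nondeg x y : (forall u, mink x u = mink y u) -> x = y.
Proof.
move=> h; apply: cV3P.
- by have := h (vec3 1 0 0); rewrite /mink !coordE => ?; lra.
- by have := h (vec3 0 1 0); rewrite /mink !coordE => ?; lra.
- by have := h (vec3 0 0 1); rewrite /mink !coordE => ?; lra.
Qed.

Lemma mink_boxtimes_mulmx (M : 'M[R]_3) x y u :
  mink (boxtimes (M *m x) (M *m y)) (M *m u) = \det M * mink (boxtimes x y) u.
Proof.
rewrite /mink /boxtimes !coordE.
case: (c_mulmx M x) => -> -> ->; case: (c_mulmx M y) => -> -> ->.
case: (c_mulmx M u) => -> -> ->; rewrite det_mx33; ring.
Qed.

Lemma mink_lift (e : R * R) : mink (lift e) (lift e) = sqnorm e - 1.
Proof. rewrite /mink /sqnorm !coordE; ring. Qed.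

(* The reversed Cauchy-Schwarz inequality of Minkowski space. *)
Lemma causal_c0_gt0 x u : mink x x <= 0 -> mink u u < 0 -> 0 < c0 u ->
  mink x u < 0 -> 0 < c0 x.
Proof.
rewrite /mink => hx hu hu0 hxu; rewrite ltNge; apply/negP => hx0.
have cs : (c1 x * c1 u + c2 x * c2 u) ^+ 2 <=
    (c1 x ^+ 2 + c2 x ^+ 2) * (c1 u ^+ 2 + c2 u ^+ 2).
  by have := sqr_ge0 (c1 x * c2 u - c2 x * c1 u); nra.
rewrite mulNr in hxu.
have {}hxu : c1 x * c1 u + c2 x * c2 u < c0 x * c0 u by lra.
set s := c1 x * c1 u + c2 x * c2 u in hxu cs.
have hp : c0 x * c0 u <= 0 by rewrite pmulr_lle0.
have hs : (c0 x * c0 u) ^+ 2 < s ^+ 2.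
  have : 0 < (c0 x * c0 u - s) * (- (c0 x * c0 u + s)) by apply: mulr_gt0; lra.
  nra.
have hX : 0 <= c1 x ^+ 2 + c2 x ^+ 2 by nra.
nra.
Qed.

Lemma lift_Pi x : c0 x != 0 -> lift (Pi x) = (c0 x)^-1 *: x.
Proof. by move=> hx; apply: cV3P; rewrite /Pi !coordE /= ?mulVf // mulrC. Qed.

Lemma PiZ k x : k != 0 -> Pi (k *: x) = Pi x.
Proof.
by move=> hk; rewrite /Pi !coordE; congr pair; rewrite invfM mulrACA divff // mul1r.
Qed.

Lemma Pi_lift (e : R * R) : Pi (lift e) = e.
Proof. by rewrite /Pi !coordE !divr1; case: e. Qed.

Lemma subr1_sqnorm_Pi x : c0 x != 0 -> 1 - sqnorm (Pi x) = - mink x x / c0 x ^+ 2.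
Proof. by move=> hx; rewrite /sqnorm /Pi /mink /=; field. Qed.

Lemma S1_le1 (e : R * R) : S1 e -> sqnorm e <= 1.
Proof. by rewrite /S1 /= => ->. Qed.

Lemma D2_le1 (e : R * R) : D2 e -> sqnorm e <= 1.
Proof. exact: ltW. Qed.

End Minkowski.

Section Lorentz.
Variables (R : realType) (A : 'M[R]_3).
Hypothesis hA : O0_12 A.
Implicit Types (x y u : 'cV[R]_3) (e : R * R).

Lemma O0_12_unitmx : A \in unitmx.
Proof. by case: hA => _ hdet _; rewrite unitmxE hdet unitr1. Qed.

Lemma O0_12_mink x y : mink (A *m x) (A *m y) = mink x y.
Proof. by case: hA. Qed.

Lemma O0_12_invmx : O0_12 (invmx A).
Proof.
have uA := O0_12_unitmx.
split.
- by move=> x y; rewrite -O0_12_mink !mulKVmx.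
- by case: hA => _ hdet _; rewrite det_inv hdet invr1.
- rewrite -c0_mulmx_e0.
  have : mink (invmx A *m vec3 1 0 0) (vec3 1 0 0) = mink (vec3 1 0 0) (A *m vec3 1 0 0).
    by rewrite -O0_12_mink mulKVmx.
  rewrite /mink !coordE c0_mulmx_e0 => h.
  by case: hA => _ _ hA00; lra.
Qed.

Lemma boxtimes_O0_12 x y : boxtimes (A *m x) (A *m y) = A *m boxtimes x y.
Proof.
apply: mink_nondeg => u; rewrite -[u](mulKVmx O0_12_unitmx).
by rewrite mink_boxtimes_mulmx O0_12_mink; case: hA => _ -> _; rewrite mul1r.
Qed.

Lemma c0_lift_gt0 e : sqnorm e <= 1 -> 0 < c0 (A *m lift e).
Proof.
move=> he; apply: (@causal_c0_gt0 _ _ (A *m vec3 1 0 0)); rewrite ?O0_12_mink.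
- by rewrite mink_lift subr_le0.
- by rewrite /mink !coordE; lra.
- by rewrite c0_mulmx_e0; case: hA.
- by rewrite /mink !coordE; lra.
Qed.

Lemma c0_lift_neq0 e : sqnorm e <= 1 -> c0 (A *m lift e) != 0.
Proof. by move=> he; rewrite gt_eqF ?c0_lift_gt0. Qed.

Lemma act_invmxK e : sqnorm e <= 1 -> act (invmx A) (act A e) = e.
Proof.
move=> he; rewrite /act lift_Pi ?c0_lift_neq0 // -scalemxAr mulKmx ?O0_12_unitmx //.
by rewrite PiZ ?Pi_lift // invr_eq0 c0_lift_neq0.
Qed.

Lemma subr1_sqnorm_act e : sqnorm e <= 1 ->
  1 - sqnorm (act A e) = (1 - sqnorm e) / c0 (A *m lift e) ^+ 2.
Proof.
by move=> he; rewrite /act subr1_sqnorm_Pi ?c0_lift_neq0 // O0_12_mink mink_lift opprB.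
Qed.

Lemma S1_act e : S1 e -> S1 (act A e).
Proof.
move=> he; have := subr1_sqnorm_act (S1_le1 he).
by rewrite he subrr mul0r => /eqP; rewrite subr_eq0 eq_sym => /eqP.
Qed.

Lemma D2_act e : D2 e -> D2 (act A e).
Proof.
move=> he; rewrite /D2 /= -subr_gt0 subr1_sqnorm_act ?D2_le1 //.
by rewrite divr_gt0 ?subr_gt0 // exprn_gt0 // c0_lift_gt0 ?D2_le1.
Qed.

End Lorentz.

Lemma act_invmxVK (R : realType) (A : 'M[R]_3) (e : R * R) : O0_12 A ->
  sqnorm e <= 1 -> act A (act (invmx A) e) = e.
Proof. by move=> hA; rewrite -{1}[A]invmxK; apply/act_invmxK/O0_12_invmx. Qed.

Lemma S1_forall_act (R : realType) (A : 'M[R]_3) (P : R * R -> Prop) : O0_12 A ->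
  (forall w, S1 w -> P w) <-> (forall z, S1 z -> P (act A z)).
Proof.
move=> hA; split=> [h z hz | h w hw]; first exact/h/S1_act.
by rewrite -(act_invmxVK hA (S1_le1 hw)); apply/h/S1_act => //; apply: O0_12_invmx.
Qed.

Section VectorFields.
Variable R : realType.
Implicit Types (x u : 'cV[R]_3) (Y : vfield R) (z w : R * R).

Lemma phi_vf_add Y1 Y2 w : phi (vf_add Y1 Y2) w = phi Y1 w + phi Y2 w.
Proof. rewrite /phi /vf_add /=; ring. Qed.

Lemma phi_dPi Y x u : c0 x != 0 -> Y (Pi x) = dPi x u ->
  phi Y (Pi x) = - c0 (boxtimes x u) / c0 x ^+ 2.
Proof. by move=> hx hY; rewrite /phi hY /dPi /Pi /boxtimes !coordE /=; field. Qed.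

Lemma phi_Killing v w : S1 w -> phi (Killing v) w = mink v (lift w).
Proof.
rewrite /S1 /sqnorm /= => hw.
rewrite /phi /Killing /dPi /boxtimes /mink !coordE /=.
transitivity (- (w.1 ^+ 2 + w.2 ^+ 2) * c0 v + c1 v * w.1 + c2 v * w.2); first by field.
by rewrite hw; ring.
Qed.

Lemma boxtimes_lift_tangent Y z : tangent Y -> S1 z ->
  boxtimes (lift z) (vec3 0 (Y z).1 (Y z).2) = - phi Y z *: lift z.
Proof.
move=> hY hz; have ht := hY z hz; move: hz; rewrite /S1 /sqnorm /= => hz.
have hu k : k = k * (z.1 ^+ 2 + z.2 ^+ 2) by rewrite hz mulr1.
apply: cV3P; rewrite /boxtimes /phi !coordE.
- ring.
- rewrite [LHS]hu; transitivity ((Y z).1 * z.1 * z.2 - (Y z).2 * z.1 ^+ 2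
    - z.2 * ((Y z).1 * z.1 + (Y z).2 * z.2)); first ring.
  by rewrite ht mulr0 subr0; ring.
- rewrite [LHS]hu; transitivity ((Y z).1 * z.2 ^+ 2 - (Y z).2 * z.1 * z.2
    + z.1 * ((Y z).1 * z.1 + (Y z).2 * z.2)); first ring.
  by rewrite ht mulr0 addr0; ring.
Qed.

Lemma phi_vf_push A Y z : O0_12 A -> tangent Y -> S1 z ->
  phi (vf_push A Y) (act A z) = phi Y z / c0 (A *m lift z).
Proof.
move=> hA hY hz; have hz1 := S1_le1 hz.
rewrite /act (phi_dPi (u := A *m vec3 0 (Y z).1 (Y z).2)) ?c0_lift_neq0 //; last first.
  by rewrite /vf_push -/(act A z) act_invmxK.
rewrite boxtimes_O0_12 // boxtimes_lift_tangent // -scalemxAr c0Z.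
by field; rewrite c0_lift_neq0.
Qed.

End VectorFields.

Section AffineExtendedReals.
Variable R : realType.
Local Open Scope ereal_scope.
Implicit Types (r k : R) (x y : \bar R).

Definition eaff r k x := x * r%:E + k%:E.

Lemma eaff_homo r k : (0 < r)%R -> {homo eaff r k : x y / x <= y}.
Proof. by move=> r0 x y xy; rewrite /eaff leeD2r // lee_wpmul2r // lee_fin ltW. Qed.

Lemma eaffK r k : (0 < r)%R -> cancel (eaff r k) (eaff r^-1 (- k / r)).
Proof.
move=> r0 [x| |] /=; rewrite /eaff /=.
- by congr EFin; field; rewrite gt_eqF.
- by rewrite !gt0_mulye ?lte_fin ?invr_gt0.
- by rewrite !gt0_mulNye ?lte_fin ?invr_gt0.
Qed.

Lemma eaffVK r k : (0 < r)%R -> cancel (eaff r^-1 (- k / r)) (eaff r k).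
Proof.
move=> r0; have /(eaffK (- k / r)%R) : (0 < r^-1)%R by rewrite invr_gt0.
by rewrite invrK mulNr opprK mulrVK ?unitfE ?gt_eqF.
Qed.

Lemma eaffB r k x y : (0 < r)%R -> eaff r k x - eaff r k y = (x - y) * r%:E.
Proof.
move=> r0; case: x => [x| |]; case: y => [y| |];
  rewrite /eaff /= ?gt0_mulye ?gt0_mulNye ?lte_fin //=.
by congr EFin; ring.
Qed.

Lemma ereal_sup_homo_can (f g : \bar R -> \bar R) (S : set (\bar R)) :
  {homo f : x y / x <= y} -> {homo g : x y / x <= y} -> cancel f g -> cancel g f ->
  ereal_sup (f @` S) = f (ereal_sup S).
Proof.
move=> hf hg fK gK; apply/eqP; rewrite eq_le; apply/andP; split.
  by apply/ereal_supP => _ [x Sx <-]; apply/hf/ereal_sup_ubound.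
rewrite -[leRHS]gK; apply: hf; apply/ereal_supP => y Sy.
by rewrite -(fK y); apply/hg/ereal_sup_ubound; exists y.
Qed.

Lemma ereal_inf_homo_can (f g : \bar R -> \bar R) (S : set (\bar R)) :
  {homo f : x y / x <= y} -> {homo g : x y / x <= y} -> cancel f g -> cancel g f ->
  ereal_inf (f @` S) = f (ereal_inf S).
Proof.
move=> hf hg fK gK; apply/eqP; rewrite eq_le; apply/andP; split; last first.
  by apply/ereal_infP => _ [x Sx <-]; apply/hf/ereal_inf_lbound.
rewrite -[leLHS]gK; apply: hf; apply/ereal_infP => y Sy.
by rewrite -(fK y); apply/hg/ereal_inf_lbound; exists y.
Qed.

End AffineExtendedReals.

Section Width.
Variable R : realType.
Implicit Types (a b : R * R * R) (e z w : R * R).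

Definition aff_vec a : 'cV[R]_3 := vec3 (- a.1.1) a.1.2 a.2.
Definition vec_aff (u : 'cV[R]_3) : R * R * R := ((- c0 u, c1 u), c2 u).

Lemma aff_mink a e : aff a e = mink (aff_vec a) (lift e).
Proof. rewrite /aff /mink /aff_vec !coordE; ring. Qed.

Lemma aff_vecK : cancel aff_vec vec_aff.
Proof. by case=> [[c b1] b2]; rewrite /vec_aff /aff_vec !coordE opprK. Qed.

Lemma vec_affK : cancel vec_aff aff_vec.
Proof. by move=> u; apply: cV3P; rewrite /vec_aff /aff_vec !coordE ?opprK. Qed.

Definition width_ratio (Y : vfield R) e : \bar R :=
  ((phi_plus Y e - phi_minus Y e) * ((Num.sqrt (1 - sqnorm e))^-1)%:E)%E.

Lemma vf_widthE (Y : vfield R) : vf_width Y = ereal_sup (width_ratio Y @` @D2 R).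
Proof. by []. Qed.

Variables (A : 'M[R]_3) (v : 'cV[R]_3) (X : vfield R).
Hypotheses (hA : O0_12 A) (hX : tangent X).
Let Y := vf_add (vf_push A X) (Killing v).
Let lambda e := c0 (A *m lift e).

Definition aff_pull a := vec_aff (invmx A *m (aff_vec a - v)).
Definition aff_push b := vec_aff (A *m aff_vec b + v).

Lemma aff_pushK : cancel aff_push aff_pull.
Proof.
by move=> b; rewrite /aff_pull /aff_push vec_affK addrK mulKmx ?aff_vecK ?O0_12_unitmx.
Qed.

Lemma aff_act a e : sqnorm e <= 1 ->
  aff a (act A e) = aff (aff_pull a) e / lambda e + mink v (lift (act A e)).
Proof.
move=> he; rewrite !aff_mink /aff_pull vec_affK.
rewrite -[LHS](subrK (mink v (lift (act A e)))) -minkBl; congr (_ + _).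
rewrite /act lift_Pi ?c0_lift_neq0 // minkZr mulrC; congr (_ * _).
by rewrite -[RHS](O0_12_mink hA) mulKVmx ?O0_12_unitmx.
Qed.

Lemma phi_act z : S1 z ->
  phi Y (act A z) = phi X z / lambda z + mink v (lift (act A z)).
Proof.
by move=> hz; rewrite phi_vf_add phi_vf_push // phi_Killing //; apply: S1_act.
Qed.

Lemma aff_subr_phi_act a z : S1 z ->
  aff a (act A z) - phi Y (act A z) = (aff (aff_pull a) z - phi X z) / lambda z.
Proof. by move=> hz; rewrite aff_act ?S1_le1 // phi_act //; ring. Qed.

Lemma aff_le_phi_act a z : S1 z ->
  (aff a (act A z) <= phi Y (act A z)) = (aff (aff_pull a) z <= phi X z).
Proof.
move=> hz; rewrite -subr_le0 aff_subr_phi_act // pmulr_lle0 ?subr_le0 //.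
by rewrite invr_gt0 c0_lift_gt0 ?S1_le1.
Qed.

Lemma phi_le_aff_act a z : S1 z ->
  (phi Y (act A z) <= aff a (act A z)) = (phi X z <= aff (aff_pull a) z).
Proof.
move=> hz; rewrite -subr_ge0 aff_subr_phi_act // pmulr_lge0 ?subr_ge0 //.
by rewrite invr_gt0 c0_lift_gt0 ?S1_le1.
Qed.

Lemma minorant_pull a : (forall w, S1 w -> aff a w <= phi Y w) <->
  (forall z, S1 z -> aff (aff_pull a) z <= phi X z).
Proof.
rewrite (S1_forall_act _ hA).
by split=> h z hz; [rewrite -aff_le_phi_act | rewrite aff_le_phi_act]; auto.
Qed.

Lemma majorant_pull a : (forall w, S1 w -> phi Y w <= aff a w) <->
  (forall z, S1 z -> phi X z <= aff (aff_pull a) z).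
Proof.
rewrite (S1_forall_act _ hA).
by split=> h z hz; [rewrite -phi_le_aff_act | rewrite phi_le_aff_act]; auto.
Qed.

Lemma image_aff_act (P Q : set (R * R * R)) e : sqnorm e <= 1 ->
  (forall a, P a <-> Q (aff_pull a)) ->
  [set (aff a (act A e))%:E | a in P] =
  eaff (lambda e)^-1 (mink v (lift (act A e))) @` [set (aff b e)%:E | b in Q].
Proof.
move=> he hPQ; apply/seteqP; split=> [_ [a Pa <-] | _ [_ [b Qb <-] <-]].
  exists (aff (aff_pull a) e)%:E; first by exists (aff_pull a) => //; apply/hPQ.
  by rewrite aff_act.
exists (aff_push b); first by apply/hPQ; rewrite aff_pushK.
by rewrite aff_act // aff_pushK.
Qed.

Lemma phi_minus_act e : D2 e -> phi_minus Y (act A e) =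
  eaff (lambda e)^-1 (mink v (lift (act A e))) (phi_minus X e).
Proof.
move=> he; have l0 : 0 < (lambda e)^-1 by rewrite invr_gt0 c0_lift_gt0 ?D2_le1.
have l0' : 0 < (lambda e)^-1^-1 by rewrite invr_gt0.
rewrite /phi_minus -(ereal_sup_homo_can _ (eaff_homo _ l0) (eaff_homo _ l0')
  (eaffK _ l0) (eaffVK _ l0)).
by congr ereal_sup; apply: image_aff_act (D2_le1 he) minorant_pull.
Qed.

Lemma phi_plus_act e : D2 e -> phi_plus Y (act A e) =
  eaff (lambda e)^-1 (mink v (lift (act A e))) (phi_plus X e).
Proof.
move=> he; have l0 : 0 < (lambda e)^-1 by rewrite invr_gt0 c0_lift_gt0 ?D2_le1.
have l0' : 0 < (lambda e)^-1^-1 by rewrite invr_gt0.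
rewrite /phi_plus -(ereal_inf_homo_can _ (eaff_homo _ l0) (eaff_homo _ l0')
  (eaffK _ l0) (eaffVK _ l0)).
by congr ereal_inf; apply: image_aff_act (D2_le1 he) majorant_pull.
Qed.

Lemma width_ratio_act e : D2 e -> width_ratio Y (act A e) = width_ratio X e.
Proof.
move=> he; have l0 := c0_lift_gt0 hA (D2_le1 he).
rewrite /width_ratio phi_plus_act // phi_minus_act // eaffB ?invr_gt0 //.
rewrite -muleA -EFinM subr1_sqnorm_act ?D2_le1 // sqrtrM ?subr_ge0 ?D2_le1 //.
rewrite -exprVn sqrtr_sqr gtr0_norm ?invr_gt0 // invfM invrK mulrCA mulVf ?gt_eqF //.
by rewrite mulr1.
Qed.

Lemma vf_width_act : vf_width Y = vf_width X.
Proof.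
rewrite !vf_widthE; congr ereal_sup; apply/seteqP; split=> _ [e he <-].
  have hB := O0_12_invmx hA.
  exists (act (invmx A) e); first exact: D2_act.
  by rewrite -width_ratio_act ?act_invmxVK ?D2_le1 //; apply: D2_act.
by exists (act A e); [exact: D2_act | rewrite width_ratio_act].
Qed.

End Width.

Theorem lemma2p15 (R : realType) (X : vfield R)
  (hXc : {within @S1 R, continuous X}) (hXt : tangent X)
  (A : 'M[R]_3) (hA : O0_12 A) (v : 'cV[R]_3) :
  vf_width (vf_add (vf_push A X) (Killing v)) = vf_width X.
Proof. exact: vf_width_act hA hXt. Qed.
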